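(* For a non-negative integer $m$, let $k^*_m$ denote the minimum $k \ge 0$ such that there exist non-negative integers $x_1,\dots,x_k,y_1,\dots,y_k$ with $\sum_{i=1}^k 2^{x_i}3^{y_i} = m$ (so $k^*_0 = 0$). For a positive integer $n$ let $$\mathcal{A}^*(n) := \frac{1}{2^n}\sum_{m=0}^{2^n-1} k^*_m .$$ Then $\mathcal{A}^*(n) \in \Omega(n/\lg n)$ as $n \to \infty$.
   Context: A representation of a non-negative integer $m$ in the double-base number system is a tuple $[k, \langle x_i\rangle_{i=1}^k, \langle y_i\rangle_{i=1}^k]$ of non-negative integers with $\sum_{i=1}^k 2^{x_i}3^{y_i}=m$; $k$ is its number of terms, and $k^*_m$ is the number of terms of a representation of $m$ with the fewest terms. $\lg$ denotes the base-2 logarithm. *)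

From mathcomp Require Import all_boot.
From Stdlib Require Import Reals ClassicalEpsilon.

(* A double-base representation of m: a list of exponent pairs (x_i, y_i)
   with sum_i 2^x_i * 3^y_i = m; its number of terms is the list length. *)
Definition dbns_value (s : seq (nat * nat)) : nat :=
  \sum_(p <- s) (2 ^ p.1 * 3 ^ p.2).

Definition has_rep (m k : nat) : Prop :=
  exists s : seq (nat * nat), size s = k /\ dbns_value s = m.

Lemma has_rep_ex (m : nat) : exists k, has_rep m k.
Proof.
  exists m; exists (nseq m (0,0)); split; first by rewrite size_nseq.
  rewrite /dbns_value; elim: m => [|m IH]; first by rewrite big_nil.
  by rewrite /= big_cons IH /= add1n.
Qed.

Definition has_repb (m k : nat) : bool :=
  if excluded_middle_informative (has_rep m k) then true else false.

Lemma has_repbP m k : has_repb m k <-> has_rep m k.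
Proof. by rewrite /has_repb; case: excluded_middle_informative. Qed.

Lemma has_repb_ex (m : nat) : exists k, has_repb m k.
Proof. by case: (has_rep_ex m) => k Hk; exists k; apply/has_repbP. Qed.

Definition kstar (m : nat) : nat := ex_minn (has_repb_ex m).

Definition Astar (n : nat) : R :=
  (INR (\sum_(0 <= m < 2 ^ n) kstar m) / (2 ^ n))%R.

(* A number m < 2^n with k*_m <= K is a sum of exactly K letters of the
   alphabet {0} ∪ {2^x 3^y : x, y < n} (pad with zeros), which has n^2 + 1
   letters; so at most (n^2 + 1)^K numbers below 2^n have k*_m <= K.
   For K = (n - 1) / (2 (L + 1)) with L = ⌊lg n⌋ this count is at most
   2^(n-1), so at least half of the m < 2^n need more than K terms and
   A*(n) >= (K + 1) / 2 >= n / (8 L) >= n / (8 lg n). *)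

From Stdlib Require Import Reals Lra.
From mathcomp Require Import all_boot zify.

Section Words.

Variable T : eqType.

Fixpoint words (A : seq T) (k : nat) : seq (seq T) :=
  if k is k'.+1 then [seq a :: w | a <- A, w <- words A k'] else [:: [::]].

Lemma size_words A k : size (words A k) = size A ^ k.
Proof. by elim: k => [|k IHk] //=; rewrite size_allpairs IHk expnS. Qed.

Lemma mem_words A w : all (mem A) w -> w \in words A (size w).
Proof.
elim: w => [|a w IHw] //= /andP[Aa Aw].
exact: (allpairs_f (fun a w => a :: w) Aa (IHw Aw)).
Qed.

End Words.

Lemma uniq_sums_size_le (A s : seq nat) k : uniq s ->
    (forall m, m \in s -> exists2 w, size w = k & all (mem A) w /\ sumn w = m) ->
  size s <= size A ^ k.
Proof.
move=> s_uniq s_sums; rewrite -size_words -(size_map sumn).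
apply: uniq_leq_size => // m /s_sums[w <- [Aw <-]].
exact/map_f/mem_words.
Qed.

Lemma sum_ge_count_gt (f : nat -> nat) K s :
  K.+1 * count (fun m => K < f m) s <= \sum_(m <- s) f m.
Proof.
elim: s => [|a s IHs]; first by rewrite big_nil muln0.
by rewrite big_cons /= mulnDr leq_add //; case: ltnP; rewrite ?muln0 ?muln1.
Qed.

Lemma natpowE a b : Nat.pow a b = a ^ b.
Proof. by elim: b => [|b IHb] //=; rewrite expnS IHb. Qed.

Definition dbns_term (p : nat * nat) : nat := 2 ^ p.1 * 3 ^ p.2.

Lemma dbns_valueE s : dbns_value s = \sum_(p <- s) dbns_term p.
Proof. by apply: eq_bigr => p _; rewrite !natpowE. Qed.

Lemma kstar_rep m : exists s, size s = kstar m /\ dbns_value s = m.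
Proof. by rewrite /kstar; case: ex_minnP => k /has_repbP. Qed.

Definition dbns_alphabet (n : nat) : seq nat :=
  0 :: [seq dbns_term (x, y) | x <- iota 0 n, y <- iota 0 n].

Lemma size_dbns_alphabet n : size (dbns_alphabet n) = (n * n).+1.
Proof. by rewrite /= size_allpairs size_iota. Qed.

Lemma dbns_term_alphabet n p :
  dbns_term p < 2 ^ n -> dbns_term p \in dbns_alphabet n.
Proof.
case: p => x y; rewrite /dbns_term /= => term_lt.
have x_lt : x < n.
  rewrite -(ltn_exp2l _ _ (isT : 1 < 2)); apply: leq_ltn_trans term_lt.
  by rewrite leq_pmulr // expn_gt0.
have y_lt : y < n.
  rewrite -(ltn_exp2l _ _ (isT : 1 < 2)); apply: leq_ltn_trans term_lt.
  apply: (@leq_trans (3 ^ y)); last by rewrite leq_pmull // expn_gt0.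
  by case: y => // y; rewrite leq_exp2r.
rewrite inE; apply/orP; right.
by apply: (allpairs_f (fun x y => dbns_term (x, y))); rewrite mem_iota.
Qed.

Lemma count_kstar_le n K :
  count (fun m => kstar m <= K) (iota 0 (2 ^ n)) <= (n * n).+1 ^ K.
Proof.
rewrite -size_filter -size_dbns_alphabet.
apply: uniq_sums_size_le; first by rewrite filter_uniq ?iota_uniq.
move=> m; rewrite mem_filter mem_iota => /andP[kstar_le m_lt].
have [s [s_size sE]] := kstar_rep m.
exists (map dbns_term s ++ nseq (K - size s) 0).
  by rewrite size_cat size_map size_nseq subnKC // s_size.
rewrite all_cat sumn_cat sumn_nseq addn0 sumnE big_map -dbns_valueE sE.
split=> //; apply/andP; split; last by rewrite all_nseq /= orbT.
apply/allP => _ /mapP[p ps ->]; apply: dbns_term_alphabet.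
apply: leq_ltn_trans m_lt; rewrite -sE dbns_valueE (big_rem _ ps) /=.
exact: leq_addr.
Qed.

Lemma kstar_sum_ge n K :
  K.+1 * (2 ^ n - (n * n).+1 ^ K) <= \sum_(0 <= m < 2 ^ n) kstar m.
Proof.
apply: leq_trans (sum_ge_count_gt _ K _); rewrite leq_mul2l; apply/orP; right.
have le_count := count_kstar_le n K.
have := count_predC (fun m => K < kstar m) (iota 0 (2 ^ n)).
rewrite size_iota (@eq_count _ (predC _) (fun m => kstar m <= K)) => [|m];
  last by rewrite /= -leqNgt.
rewrite /index_iota subn0; lia.
Qed.

Lemma sqS_le_exp2_trunc_log n : (n * n).+1 <= 2 ^ (2 * (trunc_log 2 n).+1).
Proof. by rewrite mulnC expnM mulnn; have := trunc_log_ltn n (isT : 1 < 2); nia. Qed.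

Lemma kstar_sum_ge_log n : 1 < n ->
  n * 2 ^ n <= 8 * trunc_log 2 n * \sum_(0 <= m < 2 ^ n) kstar m.
Proof.
move=> n_gt1; set L := trunc_log 2 n; set S := \sum_(_ <= _ < _) _.
set K := n.-1 %/ (2 * L.+1).
have L_gt0 : 0 < L by rewrite trunc_log_gt0.
have n_le : n <= 4 * L * K.+1.
  by have := ltn_ceil n.-1 (isT : 0 < 2 * L.+1); nia.
have alph_le : (n * n).+1 ^ K <= 2 ^ n.-1.
  apply: (@leq_trans ((2 ^ (2 * L.+1)) ^ K)).
    have [-> // | K_gt0] := posnP K.
    by rewrite leq_exp2r // sqS_le_exp2_trunc_log.
  by rewrite -expnM leq_exp2l // mulnC leq_divM.
have pow_n : 2 ^ n = 2 * 2 ^ n.-1 by rewrite -expnS prednK // ltnW.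
have S_ge : K.+1 * 2 ^ n.-1 <= S.
  by apply: leq_trans (kstar_sum_ge n K); rewrite leq_mul2l pow_n; lia.
rewrite pow_n; nia.
Qed.

Open Scope R_scope.

Lemma trunc_log2_le_log2 n : (0 < n)%N -> INR (trunc_log 2 n) <= ln (INR n) / ln 2.
Proof.
move=> n_gt0; set L := trunc_log 2 n.
have ln2_gt0 : 0 < ln 2 by have := ln_lt_2; lra.
have pow_le : 2 ^ L <= INR n.
  by rewrite -[2 ^ L]/(INR 2 ^ L) -pow_INR natpowE; apply/le_INR/leP/trunc_logP.
have L_ln2_le : INR L * ln 2 <= ln (INR n).
  have pow_gt0 : 0 < 2 ^ L by apply: pow_lt; lra.
  rewrite -ln_pow; last lra.
  have [pow_lt | ->] := Rle_lt_or_eq_dec _ _ pow_le; last exact: Rle_refl.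
  exact/Rlt_le/ln_increasing.
apply: (Rmult_le_reg_r (ln 2)) => //.
by rewrite /Rdiv Rmult_assoc Rinv_l ?Rmult_1_r //; lra.
Qed.

Lemma Astar_ge n : (1 < n)%N -> INR n / (8 * INR (trunc_log 2 n)) <= Astar n.
Proof.
move=> n_gt1; rewrite /Astar natpowE.
set L := trunc_log 2 n; set S := \sum_(_ <= _ < _) _.
have /leP/le_INR := kstar_sum_ge_log n n_gt1.
rewrite -/L -/S -!multE !mult_INR -natpowE pow_INR -[INR 2]/2 (INR_IZR_INZ 8) => sum_ge.
have L_gt0 : 0 < INR L by apply/lt_0_INR/ltP; rewrite trunc_log_gt0.
have pow_gt0 : 0 < 2 ^ n by apply: pow_lt; lra.
have -> : INR n / (8 * INR L) = INR n * 2 ^ n / (8 * INR L * 2 ^ n) by field; lra.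
have -> : INR S / 2 ^ n = 8 * INR L * INR S / (8 * INR L * 2 ^ n) by field; lra.
apply: Rmult_le_compat_r; first by apply/Rlt_le/Rinv_0_lt_compat; nra.
exact: sum_ge.
Qed.

Theorem theorem1 :
  exists c : R, 0 < c /\ exists N : nat, forall n : nat, (N <= n)%nat ->
    c * (INR n / (ln (INR n) / ln 2)) <= Astar n.
Proof.
exists (1 / 8); split; first lra.
exists 2%N => n n_ge2; apply: Rle_trans (Astar_ge n n_ge2).
have L_gt0 : 0 < INR (trunc_log 2 n) by apply/lt_0_INR/ltP; rewrite trunc_log_gt0.
have L_le := trunc_log2_le_log2 n (ltnW n_ge2).
have n_ge0 := pos_INR n.
have -> : INR n / (8 * INR (trunc_log 2 n)) =
          1 / 8 * (INR n / INR (trunc_log 2 n)) by field; lra.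
apply/Rmult_le_compat_l/Rmult_le_compat_l/Rinv_le_contravar; lra.
Qed.
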